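(* Let $d\geq 2$ and let $\mathcal{CP}$ be a $d$-dimensional cube packing with $2^d-\delta$ cubes, with representatives $x^1,\dots,x^{2^d-\delta}\in\{0,1,2,3\}^d$. Then for every coordinate $i\in\{1,\dots,d\}$ and every $j\in\{0,1,2,3\}$, the induced cube packing on layer $j$ along coordinate $i$ has at least $2^{d-1}-\delta$ cubes; that is, the number of indices $k$ with $x^k_i\in\{j, j+1 \bmod 4\}$ is at least $2^{d-1}-\delta$.
   Context: A $d$-dimensional cube packing is a $4\mathbb{Z}^d$-invariant set of pairwise disjoint translates $z+[0,2[^d$, $z\in\mathbb{Z}^d$; it is described by the set of representatives $x\in\{0,1,2,3\}^d$ of the $4\mathbb{Z}^d$-orbits of its cubes, two cubes with representatives $x,x'$ being disjoint iff $|x_i-x'_i|=2$ for some coordinate $i$. Its number of cubes is the number of orbits. Given a coordinate $i$ and $j\in\{0,1,2,3\}$, the induced cube packing on layer $j$ is the $(d-1)$-dimensional cube packing with representatives $(x^k_1,\dots,x^k_{i-1},x^k_{i+1},\dots,x^k_d)$ for all representatives $x^k$ with $x^k_i\equiv j$ or $j+1 \pmod 4$. *)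

From mathcomp Require Import all_boot all_order all_algebra.
Set Implicit Arguments. Unset Strict Implicit. Unset Printing Implicit Defensive.

(* A point of {0,1,2,3}^d : a representative of a 4Z^d-orbit of cubes z+[0,2[^d. *)
Definition rep (d : nat) := {ffun 'I_d -> 'I_4}.

Definition cubes_disjoint d (x y : rep d) : bool :=
  [exists i : 'I_d, (x i + 2 == y i :> nat) || (y i + 2 == x i :> nat)].

(* A d-dimensional cube packing, described by its set of representatives
   (one per 4Z^d-orbit); its number of cubes is #|X|. *)
Definition cube_packing d (X : {set rep d}) : Prop :=
  {in X &, forall x y, x != y -> cubes_disjoint x y}.

Definition layer d (X : {set rep d}) (i : 'I_d) (j : 'I_4) : {set rep d} :=
  [set x in X | (x i == j :> nat) || (x i == (j + 1) %% 4 :> nat)].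

From mathcomp Require Import all_boot all_order all_algebra.
From mathcomp Require Import zify.
Import GRing.Theory Num.Theory.
Local Open Scope ring_scope.

(* Two distinct cubes of a packing are opposite (differ by 2) in some
   coordinate, and opposite values of {0,1,2,3} never lie on the same side of
   the partition {1,2} | {0,3}; hence the pattern of sides is injective on a
   packing. The cubes off the layer {j, j+1} along coordinate i have i-th
   coordinate in {j+2, j+3}, where no two values are opposite, so their side
   patterns may ignore coordinate i: there are at most 2^(d-1) of them, and
   the layer keeps the remaining 2^d - delta - 2^(d-1) cubes. *)

Definition opposite (a b : 'I_4) : bool :=
  ((a + 2 == b :> nat) || (b + 2 == a :> nat))%N.

Definition inner (a : 'I_4) : bool := ((a == 1 :> nat) || (a == 2 :> nat))%N.

Definition in_layer (j a : 'I_4) : bool :=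
  ((a == j :> nat) || (a == (j + 1) %% 4 :> nat))%N.

Lemma opposite_inner (a b : 'I_4) : opposite a b -> inner a != inner b.
Proof. by case: a => [[|[|[|[|a]]]] ?]; case: b => [[|[|[|[|b]]]] ?]. Qed.

Lemma off_layer_not_opposite (j a b : 'I_4) :
  ~~ in_layer j a -> ~~ in_layer j b -> ~~ opposite a b.
Proof.
by case: a => [[|[|[|[|a]]]] ?]; case: b => [[|[|[|[|b]]]] ?];
   case: j => [[|[|[|[|j]]]] ?].
Qed.

Section OffLayer.

Context {d : nat} (i : 'I_d) (j : 'I_4).

Definition inner_pattern (x : rep d) : {ffun {k : 'I_d | k != i} -> bool} :=
  [ffun k => inner (x (val k))].

Lemma in_off_layer (X : {set rep d}) (x : rep d) :
  (x \in X :\: layer X i j) = (x \in X) && ~~ in_layer j (x i).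
Proof. by rewrite !inE; case: (x \in X); rewrite ?andbF ?andbT. Qed.

Lemma inner_pattern_inj {X : {set rep d}} :
  cube_packing X -> {in X :\: layer X i j &, injective inner_pattern}.
Proof.
move=> packX x y; rewrite !in_off_layer => /andP[xX xj] /andP[yX yj] eq_xy.
apply/eqP/negPn/negP=> /(packX x y xX yX)/existsP[k opp_xy].
have [ki|ki] := eqVneq k i.
  by rewrite -ki in xj yj; case/negP: (off_layer_not_opposite _ _ _ xj yj).
move/ffunP/(_ (exist _ k ki)): eq_xy; rewrite !ffunE /=.
by apply/eqP/opposite_inner.
Qed.

Lemma card_off_layer {X : {set rep d}} :
  cube_packing X -> (#|X :\: layer X i j| <= 2 ^ d.-1)%N.
Proof.
move/inner_pattern_inj/leq_card_in; rewrite card_ffun card_bool card_sig.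
by rewrite (eq_card (B := predC1 i)) ?cardC1 ?card_ord.
Qed.

End OffLayer.

Theorem lemma3 (d : nat) (X : {set rep d}) (delta : int) :
  (2 <= d)%N -> cube_packing X ->
  (#|X|%:Z = 2 ^+ d - delta) ->
  forall (i : 'I_d) (j : 'I_4), 2 ^+ d.-1 - delta <= (#|layer X i j|)%:Z.
Proof.
move=> _ packX cardX i j.
have off : #|X :\: layer X i j|%:Z <= 2 ^+ d.-1.
  by rewrite -natz -natrX ler_nat card_off_layer.
have layerX : X :&: layer X i j = layer X i j.
  by apply/setIidPr/subsetP=> x; rewrite inE => /andP[].
have pow2 : 2 ^+ d = 2 * 2 ^+ d.-1 :> int.
  by rewrite -exprS prednK // (leq_trans _ (ltn_ord i)).
move: cardX off; rewrite -(cardsID (layer X i j) X) layerX pow2.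
set p := 2 ^+ d.-1; lia.
Qed.
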